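(* Let $\mathcal{K}=\mathbb{F}_q((t))$, $\mathcal{O}=\mathbb{F}_q[[t]]$, $G=PGL(2,\mathcal{K})$, and fix an integer $k\ge 1$. Let $I^0=\left\{\begin{pmatrix}1+ta & b\\ tc & 1+td\end{pmatrix} : a,b,c,d\in\mathcal{O}\right\}$, let $A\subset G$ be the subgroup generated by $I^0$ and $\sigma=\begin{pmatrix}0&1\\ t&0\end{pmatrix}$, let $\psi:\mathbb{F}_q\to\mathbb{C}^\times$ be a nontrivial additive character and let $\chi:A\to\mathbb{C}^\times$ be the character given on $I^0$ by $\chi\left(\begin{pmatrix}1+ta & b\\ tc & 1+td\end{pmatrix}\right)=\psi(b_0+c_0)$ and with $\chi(\sigma)=1$. Let the group $1+t^k\mathcal{O}$ act on $G$ on the left by $g\mapsto\begin{pmatrix}z&0\\0&1\end{pmatrix}g$, and $A$ act on the right by multiplication. Call a $(1+t^k\mathcal{O})\times A$-orbit in $G$ relevant if it supports a nonzero function $f$ with $f\left(\begin{pmatrix}z&0\\0&1\end{pmatrix}g\,a\right)=\chi(a)f(g)$ for all $z\in 1+t^k\mathcal{O}$, $a\in A$. For each $n\in\mathbb{Z}$ let $R_{n,k}$ be the set of matrices $$\begin{pmatrix}a_nt^n & b_{n-k+1}t^{n-k+1}+\dots+b_{n-1}t^{n-1}\\ 0&1\end{pmatrix},\qquad a_n\in\mathbb{F}_q^\times,\ b_i\in\mathbb{F}_q,$$ and let $R=\bigcup_{n\in\mathbb{Z}}R_{n,k}$. Then $R$ contains exactly one representative of every relevant $(1+t^k\mathcal{O})\times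 A$-orbit in $G$.
   Context: For $x\in\mathcal{O}$, $x_i$ denotes the coefficient of $t^i$ in $x$. *)

From HB Require Import structures.
From mathcomp Require Import all_boot all_order all_algebra all_field.
From mathcomp Require Import zify.
From Stdlib Require Import ClassicalEpsilon.
Set Implicit Arguments. Unset Strict Implicit. Unset Printing Implicit Defensive.
Import Order.TTheory GRing.Theory Num.Theory.
Local Open Scope ring_scope.

Section Laurent.
Variable F : finFieldType.

(** Formal Laurent series: coefficient functions Z -> F with support bounded below.
    [x i] is the coefficient of t^i. *)
Definition lbounded (f : int -> F) : Prop :=
  exists m : int, forall i : int, i < m -> f i = 0.

Record laurent := Laurent { lcoef :> int -> F; lcoefP : lbounded lcoef }.

Definition lbound (x : laurent) : int :=
  proj1_sig (constructive_indefinite_description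
               (fun m : int => forall i : int, i < m -> x i = 0) (lcoefP x)).

Lemma lboundP (x : laurent) (i : int) : i < lbound x -> x i = 0.
Proof.
rewrite /lbound; case: constructive_indefinite_description => m Hm /=; exact: Hm.
Qed.

Definition lmonom_fun (n : int) (c : F) (i : int) : F := if i == n then c else 0.
Lemma lmonom_bounded n c : lbounded (lmonom_fun n c).
Proof. exists n => i Hi; rewrite /lmonom_fun; case: eqP => // E; lia. Qed.
Definition lmonom (n : int) (c : F) : laurent := Laurent (lmonom_bounded n c).

Definition lconst (c : F) : laurent := lmonom 0 c.
Definition lzero : laurent := lconst 0.
Definition lone : laurent := lconst 1.
Definition lt_ : laurent := lmonom 1 1.

Definition ladd_fun (x y : laurent) (i : int) : F := x i + y i.
Lemma ladd_bounded x y : lbounded (ladd_fun x y).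
Proof.
exists (Order.min (lbound x) (lbound y)) => i Hi.
rewrite /ladd_fun !lboundP ?addr0 //; move: Hi; rewrite lt_min => /andP[] //.
Qed.
Definition ladd x y : laurent := Laurent (ladd_bounded x y).

Definition lopp_fun (x : laurent) (i : int) : F := - x i.
Lemma lopp_bounded x : lbounded (lopp_fun x).
Proof. by exists (lbound x) => i Hi; rewrite /lopp_fun lboundP ?oppr0. Qed.
Definition lopp x : laurent := Laurent (lopp_bounded x).
Definition lsub x y := ladd x (lopp y).

(** Cauchy product: (xy)_n = sum_{i} x_i y_{n-i}, a finite sum over
    lbound x <= i <= n - lbound y. *)
Definition lmul_fun (x y : laurent) (n : int) : F :=
  \sum_(j < (absz (n - lbound x - lbound y)%R).+1)
     x (lbound x + j%:Z) * y (n - lbound x - j%:Z).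
Lemma lmul_bounded x y : lbounded (lmul_fun x y).
Proof.
exists (lbound x + lbound y) => i Hi; rewrite /lmul_fun big1 // => j _.
by rewrite (@lboundP y) ?mulr0 //; lia.
Qed.
Definition lmul x y : laurent := Laurent (lmul_bounded x y).

Definition leqc (x y : laurent) : Prop := forall i, x i = y i.
Definition lnz (x : laurent) : Prop := exists i, x i != 0.

Record mat2 := Mat2 { e11 : laurent; e12 : laurent; e21 : laurent; e22 : laurent }.

Definition mmul (M N : mat2) : mat2 :=
  Mat2 (ladd (lmul (e11 M) (e11 N)) (lmul (e12 M) (e21 N)))
       (ladd (lmul (e11 M) (e12 N)) (lmul (e12 M) (e22 N)))
       (ladd (lmul (e21 M) (e11 N)) (lmul (e22 M) (e21 N)))
       (ladd (lmul (e21 M) (e12 N)) (lmul (e22 M) (e22 N))).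
Definition mdet (M : mat2) : laurent :=
  lsub (lmul (e11 M) (e22 M)) (lmul (e12 M) (e21 M)).
(** adjugate = inverse up to the scalar det, i.e. the inverse in PGL *)
Definition madj (M : mat2) : mat2 :=
  Mat2 (e22 M) (lopp (e12 M)) (lopp (e21 M)) (e11 M).
Definition mscale (c : laurent) (M : mat2) : mat2 :=
  Mat2 (lmul c (e11 M)) (lmul c (e12 M)) (lmul c (e21 M)) (lmul c (e22 M)).
Definition meq (M N : mat2) : Prop :=
  [/\ leqc (e11 M) (e11 N), leqc (e12 M) (e12 N),
      leqc (e21 M) (e21 N) & leqc (e22 M) (e22 N)].

(** GL(2,K) and the equality of PGL(2,K) = GL(2,K)/K^x *)
Definition inGL (M : mat2) : Prop := lnz (mdet M).
Definition proj_eq (M N : mat2) : Prop := exists c, lnz c /\ meq M (mscale c N).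

Definition inO (x : laurent) : Prop := forall i : int, i < 0 -> x i = 0.
Definition in_tO (x : laurent) : Prop := forall i : int, i <= 0 -> x i = 0.
Definition in_1tO (x : laurent) : Prop := inO x /\ x 0 = 1.
Definition inUk (k : nat) (z : laurent) : Prop :=
  inO z /\ z 0 = 1 /\ forall i : int, 0 < i -> i < k%:Z -> z i = 0.

Definition inI0 (M : mat2) : Prop :=
  [/\ in_1tO (e11 M), inO (e12 M), in_tO (e21 M) & in_1tO (e22 M)].

Definition sigma : mat2 := Mat2 lzero lone lt_ lzero.

Inductive inA : mat2 -> Prop :=
| A_I0 M : inI0 M -> inA M
| A_sigma : inA sigma
| A_inv M : inA M -> inA (madj M)
| A_mul M N : inA M -> inA N -> inA (mmul M N)
| A_proj M N : proj_eq M N -> inA N -> inA M.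

Definition diagz (z : laurent) : mat2 := Mat2 z lzero lzero lone.

Definition orbitA (k : nat) (g M : mat2) : Prop :=
  exists z a, inUk k z /\ inA a /\ proj_eq M (mmul (mmul (diagz z) g) a).

Definition add_character (psi : F -> algC) : Prop :=
  [/\ forall x y, psi (x + y) = psi x * psi y,
      forall x, psi x != 0 & exists x, psi x != 1].

(** chi : A -> C^x a character (function on A as a subset of PGL),
    chi([1+ta, b; tc, 1+td]) = psi(b_0 + c_0), chi(sigma) = 1.
    Note: c_0 is the coefficient of t^1 in the entry tc. *)
Definition is_chi (psi : F -> algC) (chi : mat2 -> algC) : Prop :=
  [/\ forall M N, inA M -> proj_eq M N -> chi M = chi N,
      forall M N, inA M -> inA N -> chi (mmul M N) = chi M * chi N,
      forall M, inA M -> chi M != 0,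
      forall M, inI0 M -> chi M = psi (e12 M 0 + e21 M 1)
    & chi sigma = 1].

Definition relevant (k : nat) (chi : mat2 -> algC) (g : mat2) : Prop :=
  exists f : mat2 -> algC,
    [/\ forall M N, proj_eq M N -> f M = f N,
        forall M, ~ orbitA k g M -> f M = 0,
        exists M, f M != 0
      & forall z a M, inUk k z -> inA a -> inGL M ->
          f (mmul (mmul (diagz z) M) a) = chi a * f M].

Definition inR (k : nat) (M : mat2) : Prop :=
  exists (n : int) (a : F), a != 0 /\
    [/\ leqc (e11 M) (lmonom n a),
        forall i : int, e12 M i != 0 -> (n - k%:Z + 1 <= i) && (i <= n - 1),
        leqc (e21 M) lzero
      & leqc (e22 M) lone].

End Laurent.

(* Every element of A is a nonzero scalar times [m] or [m sigma] with [m] in I0.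
   Existence: right multiplication by A and a scalar bring [g] to the form
   [[a t^n, Y; 0, 1]] with [Y] supported in degrees [< n].  If [Y_m != 0] for
   some [m <= n - k], the left translation by [1 + e t^(n-m)] in [1 + t^k O] is
   undone by an element of I0 on which [chi] takes a value [psi s != 1], so every
   equivariant function vanishes on the orbit; hence relevance confines [Y] to
   degrees [n - k + 1 .. n - 1].
   Uniqueness: two representatives of one orbit differ by an element of A; a
   [sigma] factor would make the lower left entry nonzero, and an element of
   [K^x I0] preserves [a t^n] (compare leading terms) while [1 + t^k O] changes
   [Y] only in degrees [>= n]. *)

From HB Require Import structures.
From mathcomp Require Import all_boot all_order all_algebra all_field.
From mathcomp Require Import zify ring boolp.
Set Implicit Arguments. Unset Strict Implicit. Unset Printing Implicit Defensive.
Import Order.TTheory GRing.Theory Num.Theory.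
Local Open Scope ring_scope.

Lemma coefM_agree (R : nzSemiRingType) (p p' q q' : {poly R}) d :
  (forall j, (j <= d)%N -> p`_j = p'`_j) -> (forall j, (j <= d)%N -> q`_j = q'`_j) ->
  (p * q)`_d = (p' * q')`_d.
Proof.
by move=> Ep Eq; rewrite !coefM; apply: eq_bigr => j _; rewrite Ep ?Eq ?leq_subr // -ltnS.
Qed.

Section LaurentRing.
Variable F : finFieldType.
Local Notation K := (laurent F).
Implicit Types (x y z : K) (h : int -> F).

Lemma laurent_ext x y : x =1 y -> x = y.
Proof.
case: x y => fx px [fy py] /= /funext E; subst fy.
by rewrite (Prop_irrelevance px py).
Qed.

Definition ord_ge (L : int) x := forall i : int, i < L -> x i = 0.

Lemma ord_geW x L L' : L' <= L -> ord_ge L x -> ord_ge L' x.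
Proof. by move=> le_L'L Hx i iL'; apply: Hx; apply: lt_le_trans le_L'L. Qed.

Lemma laurent_ext_above L x y : ord_ge L x -> ord_ge L y ->
  (forall d : nat, x (L + d%:Z) = y (L + d%:Z)) -> x = y.
Proof.
move=> Hx Hy Exy; apply: laurent_ext => i.
case: (ltP i L) => [iL|Li]; first by rewrite Hx ?Hy.
have -> : i = L + (absz (i - L))%:Z by lia.
exact: Exy.
Qed.

Definition window_sum h (A : int) (N : nat) : F := \sum_(j < N) h (A + j%:Z).

Lemma window_sum_widen h A N A' N' :
  (forall i, i < A -> h i = 0) -> (forall i, A + N%:Z <= i -> h i = 0) ->
  A' <= A -> A + N%:Z <= A' + N'%:Z ->
  window_sum h A N = window_sum h A' N'.
Proof.
move=> h_lo h_hi le_A'A le_end.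
pose p := absz (A - A'); pose q := (N' - p - N)%N.
have -> : A' = A - p%:Z by lia.
have -> : N' = (p + N + q)%N by lia.
rewrite /window_sum !big_split_ord /=.
rewrite [X in _ = X + _ + _]big1 ?add0r => [|j _]; last by apply: h_lo; have := ltn_ord j; lia.
rewrite [X in _ = _ + X]big1 ?addr0 => [|j _]; last by apply: h_hi; lia.
by apply: eq_bigr => j _; congr h; lia.
Qed.

Lemma window_sum_eq h A N B M :
  (forall i, i < A -> h i = 0) -> (forall i, A + N%:Z <= i -> h i = 0) ->
  (forall i, i < B -> h i = 0) -> (forall i, B + M%:Z <= i -> h i = 0) ->
  window_sum h A N = window_sum h B M.
Proof.
move=> hA_lo hA_hi hB_lo hB_hi; pose d := absz (A - B).
rewrite (@window_sum_widen h A N (A - d%:Z) (d + d + N + M)) //; try lia.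
by rewrite (@window_sum_widen h B M (A - d%:Z) (d + d + N + M)) //; lia.
Qed.

Lemma lmul_window x y n A N :
  (forall i, i < A -> x i * y (n - i) = 0) ->
  (forall i, A + N%:Z <= i -> x i * y (n - i) = 0) ->
  lmul x y n = window_sum (fun i => x i * y (n - i)) A N.
Proof.
move=> lo hi; transitivity (window_sum (fun i => x i * y (n - i)) (lbound x)
                             (absz (n - lbound x - lbound y)%R).+1).
  by apply: eq_bigr => j _; rewrite opprD addrA.
apply: window_sum_eq => // i Hi; first by rewrite lboundP ?mul0r.
rewrite (@lboundP _ y) ?mulr0 //; move: Hi.
have := ler_norm (n - lbound x - lbound y); rewrite -abszE.
move: (absz _) => a; move: (lbound x) (lbound y) => b c; clear; lia.
Qed.

Lemma ord_geM x y L1 L2 : ord_ge L1 x -> ord_ge L2 y -> ord_ge (L1 + L2) (lmul x y).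
Proof.
move=> Hx Hy n Hn; rewrite (@lmul_window x y n L1 0) ?[window_sum _ _ _]big_ord0 // => i Hi.
  by rewrite Hx ?mul0r.
by rewrite Hy ?mulr0 //; lia.
Qed.

Definition trunc_poly (L : int) (N : nat) x : {poly F} := \poly_(j < N) x (L + j%:Z).

Lemma lmul_coef_trunc x y L1 L2 N d : ord_ge L1 x -> ord_ge L2 y -> (d < N)%N ->
  lmul x y (L1 + L2 + d%:Z) = (trunc_poly L1 N x * trunc_poly L2 N y)`_d.
Proof.
move=> Hx Hy dN; rewrite coefM (@lmul_window x y _ L1 d.+1).
- apply: eq_bigr => j _; have jd := ltn_ord j.
  have jN : (j < N)%N by rewrite (leq_ltn_trans _ dN) // -ltnS.
  have djN : (d - j < N)%N by rewrite (leq_ltn_trans (leq_subr _ _) dN).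
  rewrite !coef_poly jN djN; congr (_ * y _).
  by move: (j : nat) jd => j' jd; clear -jd; lia.
- by move=> i Hi; rewrite Hx ?mul0r.
- by move=> i Hi; rewrite Hy ?mulr0 //; move: Hi; clear; lia.
Qed.

Lemma trunc_poly_lmul x y L1 L2 N j : ord_ge L1 x -> ord_ge L2 y -> (j < N)%N ->
  (trunc_poly (L1 + L2) N (lmul x y))`_j = (trunc_poly L1 N x * trunc_poly L2 N y)`_j.
Proof. by move=> Hx Hy jN; rewrite coef_poly jN (lmul_coef_trunc Hx Hy jN). Qed.

Lemma ladd_coef x y i : ladd x y i = x i + y i. Proof. by []. Qed.
Lemma lzero_coef i : lzero F i = 0. Proof. by rewrite /= /lmonom_fun; case: ifP. Qed.
Lemma lone_coef i : lone F i = (i == 0)%:R. Proof. by rewrite /= /lmonom_fun; case: ifP. Qed.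

Lemma ord_geD x y L : ord_ge L x -> ord_ge L y -> ord_ge L (ladd x y).
Proof. by move=> Hx Hy i Hi; rewrite ladd_coef Hx ?Hy ?addr0. Qed.

Lemma ord_ge1 : ord_ge 0 (lone F).
Proof. by move=> i Hi; rewrite lone_coef; case: eqP => // E; rewrite E in Hi. Qed.

Lemma laddA : associative (@ladd F).
Proof. by move=> x y z; apply: laurent_ext => i; rewrite !ladd_coef addrA. Qed.
Lemma laddC : commutative (@ladd F).
Proof. by move=> x y; apply: laurent_ext => i; rewrite !ladd_coef addrC. Qed.
Lemma ladd0 : left_id (lzero F) (@ladd F).
Proof. by move=> x; apply: laurent_ext => i; rewrite ladd_coef lzero_coef add0r. Qed.
Lemma laddN : left_inverse (lzero F) (@lopp F) (@ladd F).
Proof. by move=> x; apply: laurent_ext => i; rewrite ladd_coef lzero_coef addNr. Qed.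

Lemma lmulC : commutative (@lmul F).
Proof.
move=> x y; have Hx := @lboundP _ x; have Hy := @lboundP _ y.
apply: (@laurent_ext_above (lbound x + lbound y)) => [||d].
- exact: ord_geM.
- by rewrite addrC; apply: ord_geM.
rewrite (lmul_coef_trunc (N := d.+1) Hx Hy) // mulrC -(lmul_coef_trunc Hy Hx) //.
by rewrite (addrC (lbound y)).
Qed.

Lemma lmulA : associative (@lmul F).
Proof.
move=> x y z; have Hx := @lboundP _ x; have Hy := @lboundP _ y; have Hz := @lboundP _ z.
have Hxy := ord_geM Hx Hy; have Hyz := ord_geM Hy Hz.
apply: (@laurent_ext_above (lbound x + lbound y + lbound z)) => [||d].
- by rewrite -addrA; apply: ord_geM.
- exact: ord_geM.
rewrite {1}(_ : lbound x + lbound y + lbound z = lbound x + (lbound y + lbound z)); last first.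
  by rewrite addrA.
rewrite (lmul_coef_trunc (N := d.+1) Hx Hyz) // (lmul_coef_trunc (N := d.+1) Hxy Hz) //.
pose T (L : int) (w : laurent F) := trunc_poly L d.+1 w.
transitivity ((T (lbound x) x * (T (lbound y) y * T (lbound z) z))`_d).
  by apply: coefM_agree => // j jd; apply: trunc_poly_lmul.
by rewrite mulrA; apply: coefM_agree => // j jd; rewrite (trunc_poly_lmul Hx Hy).
Qed.

Lemma lmulDl : left_distributive (@lmul F) (@ladd F).
Proof.
move=> x y z; pose L := Order.min (lbound x) (lbound y).
have Hx : ord_ge L x by apply: ord_geW (@lboundP _ x); rewrite ge_min lexx.
have Hy : ord_ge L y by apply: ord_geW (@lboundP _ y); rewrite ge_min lexx orbT.
have Hz := @lboundP _ z; have Hxy := ord_geD Hx Hy.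
apply: (@laurent_ext_above (L + lbound z)) => [||d].
- exact: ord_geM.
- by apply: ord_geD; apply: ord_geM.
rewrite ladd_coef !(lmul_coef_trunc (N := d.+1) _ Hz) // -coefD -mulrDl.
suff -> : trunc_poly L d.+1 (ladd x y) = trunc_poly L d.+1 x + trunc_poly L d.+1 y by [].
by apply/polyP => j; rewrite coefD !coef_poly; case: ifP; rewrite ?addr0.
Qed.

Lemma lmul1 : left_id (lone F) (@lmul F).
Proof.
move=> x; have Hx := @lboundP _ x.
apply: (@laurent_ext_above (0 + lbound x)) => [||d]; first exact: ord_geM ord_ge1 Hx.
  by rewrite add0r.
rewrite (lmul_coef_trunc (N := d.+1) ord_ge1 Hx) //.
have -> : trunc_poly 0 d.+1 (lone F) = 1.
  apply/polyP => j; rewrite coef_poly coef1 add0r lone_coef.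
  by case: j => [|j] //=; case: ifP.
by rewrite mul1r coef_poly ltnSn add0r.
Qed.

End LaurentRing.

HB.instance Definition _ (F : finFieldType) := gen_eqMixin (laurent F).
HB.instance Definition _ (F : finFieldType) := gen_choiceMixin (laurent F).
HB.instance Definition _ (F : finFieldType) :=
  GRing.isZmodule.Build (laurent F) (@laddA F) (@laddC F) (@ladd0 F) (@laddN F).

Lemma lone_neq0 (F : finFieldType) : lone F != lzero F.
Proof.
apply/eqP => /(congr1 (fun x : laurent F => x 0)).
by rewrite lone_coef lzero_coef => /eqP; rewrite oner_eq0.
Qed.

HB.instance Definition _ (F : finFieldType) :=
  GRing.Zmodule_isComNzRing.Build (laurent F)
    (@lmulA F) (@lmulC F) (@lmul1 F) (@lmulDl F) (@lone_neq0 F).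

Section LaurentValuation.
Variable F : finFieldType.
Local Notation K := (laurent F).
Implicit Types (x y u : K).

Lemma lcoefD x y i : (x + y) i = x i + y i. Proof. by []. Qed.
Lemma lcoefN x i : (- x) i = - x i. Proof. by []. Qed.
Lemma lcoefB x y i : (x - y) i = x i - y i. Proof. by []. Qed.
Lemma lcoef0 i : (0 : K) i = 0. Proof. exact: lzero_coef. Qed.
Lemma lcoef1 i : (1 : K) i = (i == 0)%:R. Proof. exact: lone_coef. Qed.

Lemma ord_geN x L : ord_ge L x -> ord_ge L (- x).
Proof. by move=> Hx i Hi; rewrite lcoefN Hx ?oppr0. Qed.

Lemma ord_geB x y L : ord_ge L x -> ord_ge L y -> ord_ge L (x - y).
Proof. by move=> Hx Hy; apply: ord_geD => //; apply: ord_geN. Qed.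

Lemma ord_ge0 L : ord_ge L (0 : K).
Proof. by move=> i _; rewrite lcoef0. Qed.

Lemma ord_geMW x y L1 L2 L : ord_ge L1 x -> ord_ge L2 y -> L <= L1 + L2 -> ord_ge L (x * y).
Proof. by move=> Hx Hy HL; apply: ord_geW HL (ord_geM Hx Hy). Qed.

Lemma lcoefM_ord x y L1 L2 : ord_ge L1 x -> ord_ge L2 y -> (x * y) (L1 + L2) = x L1 * y L2.
Proof.
move=> Hx Hy; have := lmul_coef_trunc (N := 1) (d := 0) Hx Hy erefl.
by rewrite addr0 coef0M !coef_poly /= !addr0.
Qed.

Lemma lmonom_coef n (c : F) i : lmonom n c i = if i == n then c else 0.
Proof. by []. Qed.

Lemma ord_ge_lmonom n (c : F) : ord_ge n (lmonom n c).
Proof. by move=> i Hi; rewrite lmonom_coef; case: eqP => // E; rewrite E ltxx in Hi. Qed.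

Lemma lcoef_lmonomM n (c : F) x i : (lmonom n c * x) i = c * x (i - n).
Proof.
rewrite -[LHS]/(lmul _ _ _) (@lmul_window _ _ _ _ n 1).
- by rewrite /window_sum big_ord1 addr0 lmonom_coef eqxx.
- by move=> j Hj; rewrite lmonom_coef; case: eqP => [E|_]; [rewrite E ltxx in Hj|rewrite mul0r].
- move=> j Hj; rewrite lmonom_coef; case: eqP => [E|_]; last by rewrite mul0r.
  by move: Hj; rewrite E; lia.
Qed.

Lemma lmonomM n m (c d : F) : lmonom n c * lmonom m d = lmonom (n + m) (c * d) :> K.
Proof.
apply: laurent_ext => i; rewrite lcoef_lmonomM !lmonom_coef.
have -> : (i - n == m) = (i == n + m) by apply/eqP/eqP; lia.
by case: ifP; rewrite ?mulr0.
Qed.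

Lemma lmonom01 : lmonom 0 1 = 1 :> K. Proof. by []. Qed.

Lemma lmonomN n (c : F) : - lmonom n c = lmonom n (- c) :> K.
Proof. by apply: laurent_ext => i; rewrite lcoefN !lmonom_coef; case: ifP; rewrite ?oppr0. Qed.

Lemma laurent_neq0P x : x != 0 <-> exists i, x i != 0.
Proof.
split=> [x_neq0|[i xi_neq0]]; last by apply: contraNneq xi_neq0 => ->; rewrite lcoef0.
apply: contrapT => x_eq0; move/eqP: x_neq0; apply; apply: laurent_ext => i.
by rewrite lcoef0; apply/eqP; apply: contrapT => /negP xi; apply: x_eq0; exists i.
Qed.

Lemma lmonom_eq0 n (c : F) : (lmonom n c == 0 :> K) = (c == 0).
Proof.
apply/idP/idP => [|/eqP->]; last first.
  by apply/eqP/laurent_ext => i; rewrite lmonom_coef lcoef0; case: ifP.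
by apply: contraLR => c_neq0; apply/laurent_neq0P; exists n; rewrite lmonom_coef eqxx.
Qed.

Lemma exists_valuation x : x != 0 -> exists2 v, x v != 0 & ord_ge v x.
Proof.
move=> /laurent_neq0P[i xi_neq0]; pose L := lbound x.
have ex_nz : exists j : nat, x (L + j%:Z) != 0.
  exists (absz (i - L)); suff -> : L + (absz (i - L))%:Z = i by [].
  suff : L <= i by lia.
  by rewrite leNgt; apply: contra xi_neq0 => /lboundP ->.
case: (ex_minnP ex_nz) => m xm_neq0 m_min.
exists (L + m%:Z) => // i' i'_lt; case: (ltP i' L) => [|L_le]; first exact: lboundP.
apply/eqP; apply: contraT => xi'_neq0.
have := m_min (absz (i' - L)); rewrite (_ : L + _ = i'); last by lia.
by move=> /(_ xi'_neq0); lia.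
Qed.

Section OneTInverse.
Variable u : K.
Hypothesis u_1tO : in_1tO u.

(* [inv_prefix n] lists the coefficients w_0, ..., w_n of u^-1, computed by
   w_0 = 1 and w_(n+1) = - \sum_(i <= n) u_(i+1) w_(n-i). *)
Fixpoint inv_prefix (n : nat) : seq F :=
  if n is n'.+1 then
    rcons (inv_prefix n')
      (- \sum_(i < n'.+1) u (i.+1)%:Z * nth 0 (inv_prefix n') (n' - i))
  else [:: 1].

Lemma size_inv_prefix n : size (inv_prefix n) = n.+1.
Proof. by elim: n => //= n IH; rewrite size_rcons IH. Qed.

Lemma nth_inv_prefix n m j : (j <= n)%N -> (n <= m)%N ->
  nth 0 (inv_prefix m) j = nth 0 (inv_prefix n) j.
Proof.
move=> jn; elim: m => [|m IH]; first by rewrite leqn0 => /eqP ->.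
rewrite leq_eqVlt => /orP [/eqP -> //|]; rewrite ltnS => nm.
by rewrite /= nth_rcons size_inv_prefix ltnS (leq_trans jn nm) IH.
Qed.

Definition inv_coef (j : nat) : F := nth 0 (inv_prefix j) j.

Lemma inv_coefS n : inv_coef n.+1 = - \sum_(i < n.+1) u (i.+1)%:Z * inv_coef (n - i).
Proof.
rewrite /inv_coef /= nth_rcons size_inv_prefix ltnn eqxx; congr (- _).
by apply: eq_bigr => i _; rewrite (@nth_inv_prefix (n - i)) // leq_subr.
Qed.

Definition inv_series_fun (i : int) : F := if i is Posz j then inv_coef j else 0.

Lemma inv_series_bounded : lbounded inv_series_fun.
Proof. by exists 0 => -[]. Qed.

Definition inv_series : K := Laurent inv_series_bounded.

Lemma inv_series_1tO : in_1tO inv_series.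
Proof. by split=> // -[]. Qed.

Lemma inv_seriesP : u * inv_series = 1.
Proof.
have [u_O u0] := u_1tO; have [w_O _] := inv_series_1tO.
apply: (@laurent_ext_above _ 0) => [||d]; [exact: (ord_geM u_O w_O) | exact: ord_ge1 |].
rewrite -[0 + _]add0r (lmul_coef_trunc (N := d.+1) u_O w_O) // coefM add0r lcoef1.
under eq_bigr => j _ do rewrite !coef_poly ltn_ord (leq_ltn_trans (leq_subr _ _)) // !add0r.
case: d => [|d]; first by rewrite big_ord1 /= u0 mul1r.
rewrite big_ord_recl /= u0 mul1r subn0 inv_coefS addrC; apply/eqP; rewrite subr_eq0; apply/eqP.
by apply: eq_bigr => i _; rewrite /bump /= add1n subSS.
Qed.

End OneTInverse.

Lemma in_1tO_inv u : in_1tO u -> exists2 w, in_1tO w & u * w = 1.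
Proof. by move=> u_1tO; exists (inv_series u); [exact: inv_series_1tO | exact: inv_seriesP]. Qed.

Lemma laurent_normal_form x : x != 0 ->
  exists n (a : F) u, [/\ a != 0, in_1tO u & x = lmonom n a * u].
Proof.
move=> /exists_valuation[v xv_neq0 x_ge_v].
exists v, (x v), (lmonom (- v) (x v)^-1 * x); split => //.
- split; first by have := ord_geM (@ord_ge_lmonom (- v) (x v)^-1) x_ge_v; rewrite addNr.
  have := lcoefM_ord (@ord_ge_lmonom (- v) (x v)^-1) x_ge_v.
  by rewrite addNr => ->; rewrite lmonom_coef eqxx mulVf.
- by rewrite mulrA lmonomM addrN mulfV // lmonom01 mul1r.
Qed.

Lemma laurent_inverse x : x != 0 -> exists y, y * x = 1.
Proof.
move=> /laurent_normal_form[n [a [u [a_neq0 u_1tO ->]]]].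
have [w _ uw] := in_1tO_inv u_1tO.
exists (lmonom (- n) a^-1 * w).
by rewrite mulrACA lmonomM addNr mulVf // lmonom01 mul1r mulrC.
Qed.

Definition laurent_inv x : K :=
  if pselect (exists y, y * x = 1) is left ex then projT1 (cid ex) else 0.

Lemma laurent_mulVf x : x != 0 -> laurent_inv x * x = 1.
Proof.
rewrite /laurent_inv => /laurent_inverse ex; case: pselect => [ex'|] //.
exact: projT2 (cid ex').
Qed.

Lemma laurent_inv0 : laurent_inv 0 = 0.
Proof.
rewrite /laurent_inv; case: pselect => // -[y y0]; exfalso; move: y0.
by rewrite mulr0 => /esym/eqP; rewrite oner_eq0.
Qed.

End LaurentValuation.

HB.instance Definition _ (F : finFieldType) :=
  GRing.ComNzRing_isField.Build (laurent F) (@laurent_mulVf F) (@laurent_inv0 F).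

Section Matrices.
Variable F : finFieldType.
Local Notation K := (laurent F).
Local Notation M2 := (mat2 F).
Local Notation t := (lt_ F).
Implicit Types (x y c : K) (A B M N : M2).

Lemma laddE x y : ladd x y = x + y. Proof. by []. Qed.
Lemma lmulE x y : lmul x y = x * y. Proof. by []. Qed.
Lemma loppE x : lopp x = - x. Proof. by []. Qed.
Lemma lsubE x y : lsub x y = x - y. Proof. by []. Qed.
Lemma lzeroE : lzero F = 0. Proof. by []. Qed.
Lemma loneE : lone F = 1. Proof. by []. Qed.
Definition laurentE := (laddE, lmulE, loppE, lsubE, lzeroE, loneE).

Definition tinv : K := lmonom (-1) 1.

Lemma t_tinv : t * tinv = 1.
Proof. by rewrite lmonomM mulr1 addrN. Qed.

Lemma t_neq0 : t != 0.
Proof. by rewrite lmonom_eq0 oner_neq0. Qed.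

Definition mat2_1 : M2 := Mat2 1 0 0 1.

Definition mconj M : M2 := Mat2 (e22 M) (tinv * e21 M) (t * e12 M) (e11 M).

Ltac mat2_expand :=
  repeat match goal with A : mat2 _ |- _ => case: A => ? ? ? ? end;
  rewrite /mmul /mscale /madj /mdet /mconj /mat2_1 /sigma /diagz /= ?laurentE.
Ltac mat2_ring := mat2_expand; (congr Mat2 || idtac); ring.

Lemma mmulA A B C : mmul A (mmul B C) = mmul (mmul A B) C. Proof. mat2_ring. Qed.
Lemma mmul1l A : mmul mat2_1 A = A. Proof. mat2_ring. Qed.
Lemma mmul1r A : mmul A mat2_1 = A. Proof. mat2_ring. Qed.
Lemma mscale1 A : mscale 1 A = A. Proof. mat2_ring. Qed.
Lemma mscaleA c c' A : mscale c (mscale c' A) = mscale (c * c') A. Proof. mat2_ring. Qed.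
Lemma mscaleMl c A B : mmul (mscale c A) B = mscale c (mmul A B). Proof. mat2_ring. Qed.
Lemma mscaleMr c A B : mmul A (mscale c B) = mscale c (mmul A B). Proof. mat2_ring. Qed.
Lemma madjM A B : madj (mmul A B) = mmul (madj B) (madj A). Proof. mat2_ring. Qed.
Lemma madj_scale c A : madj (mscale c A) = mscale c (madj A). Proof. mat2_ring. Qed.
Lemma madj_sigma : madj (sigma F) = mscale (-1) (sigma F). Proof. mat2_ring. Qed.
Lemma sigma_sqr : mmul (sigma F) (sigma F) = mscale t mat2_1. Proof. mat2_ring. Qed.
Lemma mdetM A B : mdet (mmul A B) = mdet A * mdet B. Proof. mat2_ring. Qed.
Lemma mdet_scale c A : mdet (mscale c A) = c * c * mdet A. Proof. mat2_ring. Qed.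
Lemma mdet_sigma : mdet (sigma F) = - t. Proof. mat2_ring. Qed.

Lemma mmul_sigma_r g : mmul g (sigma F) = Mat2 (e12 g * t) (e11 g) (e22 g * t) (e21 g).
Proof. mat2_ring. Qed.

Lemma mmul_sigma_conj M : mmul (sigma F) M = mmul (mconj M) (sigma F).
Proof.
case: M => a b c d; mat2_expand; congr Mat2; try ring.
by transitivity (t * tinv * c); [rewrite t_tinv | ]; ring.
Qed.

(* If [r_i = c_i diag(z_i, 1) g a_i], this expresses [r2] through [r1 a1^-1 a2]. *)
Lemma orbit_transport g a1 a2 z1 z2 c1 c2 :
  mscale (c1 * mdet a1 * z1) (mscale c2 (mmul (mmul (diagz z2) g) a2)) =
  mscale c2 (mmul (Mat2 z2 0 0 z1)
    (mmul (mscale c1 (mmul (mmul (diagz z1) g) a1)) (mmul (madj a1) a2))).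
Proof. mat2_ring. Qed.

Lemma mat2_eqE (A B : M2) : A = B ->
  [/\ e11 A = e11 B, e12 A = e12 B, e21 A = e21 B & e22 A = e22 B].
Proof. by move->. Qed.

Lemma lnzP c : lnz c <-> c != 0.
Proof. by rewrite laurent_neq0P. Qed.

Lemma meqP A B : meq A B -> A = B.
Proof.
by case: A B => ? ? ? ? [? ? ? ?] [/= /laurent_ext-> /laurent_ext-> /laurent_ext-> /laurent_ext->].
Qed.

Lemma proj_eqP A B : proj_eq A B <-> exists2 c, c != 0 & A = mscale c B.
Proof.
split=> [[c [/lnzP c_neq0 /meqP ->]]|[c c_neq0 ->]]; exists c => //.
by split; [exact/lnzP | split].
Qed.

End Matrices.

Section Iwahori.
Variable F : finFieldType.
Local Notation K := (laurent F).
Local Notation M2 := (mat2 F).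
Local Notation t := (lt_ F).
Implicit Types (x y c : K) (m n M N : M2).

Lemma in_tOP x : in_tO x <-> ord_ge 1 x.
Proof. by split=> Hx i Hi; apply: Hx; lia. Qed.

Lemma in_1tO_neq0 x : in_1tO x -> x != 0.
Proof. by case=> _ x0; apply/laurent_neq0P; exists 0; rewrite x0 oner_neq0. Qed.

Lemma in_1tO1 : in_1tO (1 : K).
Proof. by split; [exact: ord_ge1 | rewrite lcoef1]. Qed.

Lemma in_1tOM x y : in_1tO x -> in_1tO y -> in_1tO (x * y).
Proof.
case=> x_O x0 [y_O y0]; split; first exact: ord_geMW x_O y_O _.
by have := lcoefM_ord x_O y_O; rewrite addr0 x0 y0 mulr1.
Qed.

Lemma in_1tOD x y : in_1tO x -> ord_ge 1 y -> in_1tO (x + y).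
Proof.
case=> x_O x0 y_tO; split; first by apply: ord_geD x_O (ord_geW _ y_tO).
by rewrite lcoefD x0 y_tO // addr0.
Qed.

Lemma inI0_upper x b z : in_1tO x -> inO b -> in_1tO z -> inI0 (Mat2 x b 0 z).
Proof. by move=> hx hb hz; split => //; apply/in_tOP; exact: ord_ge0. Qed.

Lemma inI0_1 : inI0 (mat2_1 F).
Proof. by apply: inI0_upper; [exact: in_1tO1 | exact: ord_ge0 | exact: in_1tO1]. Qed.

Lemma inI0M m n : inI0 m -> inI0 n -> inI0 (mmul m n).
Proof.
case: m n => a b c d [a' b' c' d'] [/= ha hb /in_tOP hc hd] [/= ha' hb' /in_tOP hc' hd'].
rewrite /inI0 /mmul /= ?laurentE; split.
- exact: in_1tOD (in_1tOM ha ha') (ord_geMW hb hc' _).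
- exact: ord_geD (ord_geMW ha.1 hb' _) (ord_geMW hb hd'.1 _).
- by apply/in_tOP; apply: ord_geD (ord_geMW hc ha'.1 _) (ord_geMW hd.1 hc' _).
- by rewrite addrC; apply: in_1tOD (in_1tOM hd hd') (ord_geMW hc hb' _).
Qed.

Lemma inI0_adj m : inI0 m -> inI0 (madj m).
Proof.
case: m => a b c d [/= ha hb hc hd]; split => //=; first exact: ord_geN.
by apply/in_tOP; apply: ord_geN; apply/in_tOP.
Qed.

Lemma inI0_conj m : inI0 m -> inI0 (mconj m).
Proof.
case: m => a b c d [/= ha hb /in_tOP hc hd]; split => //=.
- exact: ord_geMW (@ord_ge_lmonom _ (-1) 1) hc _.
- by apply/in_tOP; apply: ord_geMW (@ord_ge_lmonom _ 1 1) hb _.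
Qed.

Lemma inI0_det_neq0 m : inI0 m -> mdet m != 0.
Proof.
case: m => a b c d [/= ha hb /in_tOP hc hd]; rewrite /mdet /= ?laurentE.
by apply: in_1tO_neq0; rewrite -mulNr; apply: in_1tOD (in_1tOM ha hd) (ord_geMW (ord_geN hb) hc _).
Qed.

Definition sigma_pow (e : bool) : M2 := if e then sigma F else mat2_1 F.

Lemma mmul_sigma_pow m e n f :
  mmul (mmul m (sigma_pow e)) (mmul n (sigma_pow f)) =
  mscale (if e && f then t else 1) (mmul (mmul m (if e then mconj n else n)) (sigma_pow (e (+) f))).
Proof.
case: e f => -[] /=; rewrite ?mscale1 ?mmul1r ?mmulA //.
- by rewrite -(mmulA m) mmul_sigma_conj -!mmulA sigma_sqr !mscaleMr mmul1r.
- by rewrite -(mmulA m) mmul_sigma_conj mmulA.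
Qed.

Definition in_KI0sigma M :=
  exists m c (e : bool), [/\ inI0 m, c != 0 & M = mscale c (mmul m (sigma_pow e))].

Lemma in_KI0sigma_scale c M : c != 0 -> in_KI0sigma M -> in_KI0sigma (mscale c M).
Proof.
move=> c_neq0 [m [c' [e [Hm c'_neq0 ->]]]].
by exists m, (c * c'), e; split; rewrite ?mulf_neq0 ?mscaleA.
Qed.

Lemma in_KI0sigma_mul M N : in_KI0sigma M -> in_KI0sigma N -> in_KI0sigma (mmul M N).
Proof.
move=> [m [c [e [Hm c_neq0 ->]]]] [n [c' [f [Hn c'_neq0 ->]]]].
rewrite mscaleMl mscaleMr mmul_sigma_pow; do 2 apply: in_KI0sigma_scale => //.
apply: in_KI0sigma_scale; first by case: (e && f); rewrite ?t_neq0 ?oner_neq0.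
exists (mmul m (if e then mconj n else n)), 1, (e (+) f); rewrite mscale1; split => //.
  by apply: inI0M => //; case: e => //; exact: inI0_conj.
exact: oner_neq0.
Qed.

Lemma in_KI0sigma_I0 m : inI0 m -> in_KI0sigma m.
Proof. by exists m, 1, false; rewrite mscale1 mmul1r; split => //; exact: oner_neq0. Qed.

Lemma in_KI0sigma_sigma : in_KI0sigma (sigma F).
Proof.
by exists (mat2_1 F), 1, true; rewrite mscale1 mmul1l; split; [exact: inI0_1 | exact: oner_neq0 |].
Qed.

Lemma in_KI0sigma_adj M : in_KI0sigma M -> in_KI0sigma (madj M).
Proof.
move=> [m [c [e [Hm c_neq0 ->]]]]; rewrite madj_scale madjM.
apply: in_KI0sigma_scale c_neq0 _; apply: in_KI0sigma_mul; last exact/in_KI0sigma_I0/inI0_adj.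
case: e => /=; last exact/in_KI0sigma_I0/inI0_adj/inI0_1.
by rewrite madj_sigma; apply: in_KI0sigma_scale in_KI0sigma_sigma; rewrite oppr_eq0 oner_neq0.
Qed.

Lemma inA_KI0sigma M : inA M -> in_KI0sigma M.
Proof.
elim=> {M} [M /in_KI0sigma_I0 //| | M _ /in_KI0sigma_adj //| M N _ HM _ HN |
            M N /proj_eqP[c c_neq0 ->] _ HN].
- exact: in_KI0sigma_sigma.
- exact: in_KI0sigma_mul.
- exact: in_KI0sigma_scale.
Qed.

Lemma inA_det_neq0 M : inA M -> mdet M != 0.
Proof.
move=> /inA_KI0sigma[m [c [e [Hm c_neq0 ->]]]].
rewrite mdet_scale mdetM !mulf_neq0 //; first exact: inI0_det_neq0.
case: e => /=; first by rewrite mdet_sigma oppr_eq0 t_neq0.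
exact: inI0_det_neq0 inI0_1.
Qed.

End Iwahori.

Section Uniqueness.
Variable F : finFieldType.
Local Notation K := (laurent F).
Local Notation M2 := (mat2 F).
Implicit Types (x y z Y : K) (m r g : M2).

Lemma inUk_1tO k z : inUk k z -> in_1tO z.
Proof. by case=> z_O [z0 _]. Qed.

Lemma inUk_sub1 k z : inUk k z -> ord_ge k%:Z (z - 1).
Proof.
case=> z_O [z0 z_hi] i ik; rewrite lcoefB lcoef1.
by case: (ltrgtP i 0) => [/z_O-> | /z_hi->//| ->]; rewrite ?z0 ?subrr ?subr0.
Qed.

Definition supp_in (lo hi : int) Y := forall i, Y i != 0 -> lo <= i <= hi.

Lemma supp_in_ord_ge lo hi Y : supp_in lo hi Y -> ord_ge lo Y.
Proof. by move=> HY i Hi; apply/eqP; apply: contraTT Hi => /HY/andP[+ _]; rewrite -leNgt. Qed.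

Lemma supp_in_above lo hi Y i : supp_in lo hi Y -> hi < i -> Y i = 0.
Proof. by move=> HY Hi; apply/eqP; apply: contraTT Hi => /HY/andP[_]; rewrite -leNgt. Qed.

Definition Rmat n (a : F) Y : M2 := Mat2 (lmonom n a) Y 0 1.

Lemma inRP k r : inR k r <->
  exists n (a : F) Y, [/\ a != 0, supp_in (n - k%:Z + 1) (n - 1) Y & r = Rmat n a Y].
Proof.
split=> [[n [a [a_neq0 [r11 r12 r21 r22]]]]|[n [a [Y [a_neq0 HY ->]]]]].
  exists n, a, (e12 r); split => //; apply: meqP; split => //=; exact: laurent_ext.
by exists n, a; split => //; split.
Qed.

Lemma ord_ge_1tO_cancel d y L : in_1tO d -> ord_ge L (d * y) -> ord_ge L y.
Proof.
move=> d_1tO dy_ge; have [w [w_O _] dw] := in_1tO_inv d_1tO.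
have -> : y = w * (d * y) by rewrite mulrA (mulrC w) dw mul1r.
by rewrite -[L]add0r; apply: ord_geM.
Qed.

Lemma lmonom_1tO_inj P Q n1 n2 (a1 a2 : F) : in_1tO P -> in_1tO Q -> a1 != 0 -> a2 != 0 ->
  P * lmonom n2 a2 = Q * lmonom n1 a1 -> n1 = n2 /\ a1 = a2.
Proof.
case=> P_O P0 [Q_O Q0] a1_neq0 a2_neq0 E.
have E_at i : a2 * P (i - n2) = a1 * Q (i - n1).
  by have := congr1 (fun x : K => x i) E; rewrite ![_ * lmonom _ _]mulrC !lcoef_lmonomM.
case: (ltrgtP n1 n2) => n12.
- have := E_at n1; rewrite subrr Q0 mulr1 P_O ?mulr0; last by rewrite subr_lt0.
  by move=> /eqP; rewrite eq_sym (negbTE a1_neq0).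
- have := E_at n2; rewrite subrr P0 mulr1 Q_O ?mulr0; last by rewrite subr_lt0.
  by move=> /eqP; rewrite (negbTE a2_neq0).
- by split => //; have := E_at n2; rewrite n12 subrr P0 Q0 !mulr1.
Qed.

(* [z - 1] has order [>= k] and [Y] order [>= n - k + 1], so the equation pins
   down [Y] in all degrees [< n], which is where [Y] lives. *)
Lemma R_tail_unique k n (a : F) Y1 Y2 z1 z2 be de :
  supp_in (n - k%:Z + 1) (n - 1) Y1 -> supp_in (n - k%:Z + 1) (n - 1) Y2 ->
  inUk k z1 -> inUk k z2 -> inO be -> in_1tO de ->
  z1 * de * Y2 = z2 * (lmonom n a * be + Y1 * de) -> Y1 = Y2.
Proof.
move=> hY1 hY2 hz1 hz2 be_O de_1tO E.
have [de_O _] := de_1tO.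
have diff : de * (Y2 - Y1) =
    z2 * lmonom n a * be + (z2 - 1) * (de * Y1) - (z1 - 1) * (de * Y2).
  apply/eqP; rewrite -subr_eq0; apply/eqP.
  by transitivity (z1 * de * Y2 - z2 * (lmonom n a * be + Y1 * de)); [ring | rewrite E subrr].
have tail_ge (z Y : K) : inUk k z -> supp_in (n - k%:Z + 1) (n - 1) Y ->
    ord_ge n ((z - 1) * (de * Y)).
  move=> hz hY; apply: ord_geMW (inUk_sub1 hz) (ord_geMW de_O (supp_in_ord_ge hY) (lexx _)) _.
  by rewrite add0r; lia.
have : ord_ge n (Y2 - Y1).
  apply: ord_ge_1tO_cancel de_1tO _; rewrite diff.
  apply: ord_geB (tail_ge _ _ hz1 hY2); apply: ord_geD (tail_ge _ _ hz2 hY1).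
  apply: ord_geMW (ord_geMW (inUk_1tO hz2).1 (@ord_ge_lmonom _ n a) (lexx _)) be_O _.
  by rewrite add0r addr0.
move=> low; apply: laurent_ext => i; apply/eqP; rewrite eq_sym -subr_eq0 -lcoefB; apply/eqP.
case: (ltP i n) => [/low //|ni]; have hi : n - 1 < i by lia.
by rewrite lcoefB (supp_in_above hY1 hi) (supp_in_above hY2 hi) subr0.
Qed.

Lemma Rmat_orbit_I0 k n1 n2 a1 a2 Y1 Y2 z1 z2 lam nu m :
  a1 != 0 -> a2 != 0 ->
  supp_in (n1 - k%:Z + 1) (n1 - 1) Y1 -> supp_in (n2 - k%:Z + 1) (n2 - 1) Y2 ->
  inUk k z1 -> inUk k z2 -> inI0 m -> nu != 0 ->
  mscale lam (Rmat n2 a2 Y2) = mscale nu (mmul (Mat2 z2 0 0 z1) (mmul (Rmat n1 a1 Y1) m)) ->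
  Rmat n1 a1 Y1 = Rmat n2 a2 Y2.
Proof.
move=> a1_neq0 a2_neq0 hY1 hY2 hz1 hz2; case: m => al be ga de [/= ha hb _ hd] nu_neq0.
rewrite /mscale /mmul /Rmat => /mat2_eqE[/= E11 E12 E21 E22].
rewrite ?laurentE in E11 E12 E21 E22.
have z1_neq0 := in_1tO_neq0 (inUk_1tO hz1).
have ga0 : ga = 0.
  have : nu * z1 * ga = 0 by rewrite -[RHS](mulr0 lam) E21; ring.
  by move/eqP; rewrite !mulf_eq0 (negbTE nu_neq0) (negbTE z1_neq0) => /eqP.
have lamE : lam = nu * (z1 * de) by rewrite -[lam]mulr1 E22; ring.
have E11' : z1 * de * lmonom n2 a2 = z2 * al * lmonom n1 a1.
  by apply: (mulfI nu_neq0); rewrite mulrA -lamE E11 ga0; ring.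
have [n12 a12] := lmonom_1tO_inj (in_1tOM (inUk_1tO hz1) hd) (in_1tOM (inUk_1tO hz2) ha)
                     a1_neq0 a2_neq0 E11'.
subst n2 a2.
congr Mat2; apply: R_tail_unique hY1 hY2 hz1 hz2 hb hd _.
by apply: (mulfI nu_neq0); rewrite mulrA -lamE E12; ring.
Qed.

Lemma Rmat_orbit_I0sigma k n1 n2 a1 a2 Y1 Y2 z1 z2 lam nu m :
  inUk k z1 -> inI0 m -> nu != 0 ->
  mscale lam (Rmat n2 a2 Y2) <>
  mscale nu (mmul (Mat2 z2 0 0 z1) (mmul (Rmat n1 a1 Y1) (mmul m (sigma F)))).
Proof.
move=> hz1; case: m => al be ga de [_ _ _ hd] nu_neq0.
rewrite /mscale /mmul /Rmat /sigma => /mat2_eqE[_ _ /= E21 _]; rewrite ?laurentE in E21.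
have [] : nu * z1 * de * lt_ F <> 0.
  apply/eqP; rewrite !mulf_neq0 ?t_neq0 ?(in_1tO_neq0 hd) //.
  exact/in_1tO_neq0/(inUk_1tO hz1).
by rewrite -[RHS](mulr0 lam) E21; ring.
Qed.

Lemma orbitA_inR_unique k g r1 r2 :
  inR k r1 -> inR k r2 -> orbitA k g r1 -> orbitA k g r2 -> proj_eq r1 r2.
Proof.
move=> /inRP[n1 [a1 [Y1 [a1_neq0 hY1 ->]]]] /inRP[n2 [a2 [Y2 [a2_neq0 hY2 ->]]]].
move=> [z1 [b1 [hz1 [hb1 /proj_eqP[c1 c1_neq0 E1]]]]].
move=> [z2 [b2 [hz2 [hb2 /proj_eqP[c2 c2_neq0 E2]]]]].
have := orbit_transport g b1 b2 z1 z2 c1 c2; rewrite -E1 -E2.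
have /inA_KI0sigma[m [c [e [hm c_neq0 ->]]]] : inA (mmul (madj b1) b2).
  by apply: A_mul => //; apply: A_inv.
rewrite !mscaleMr mscaleA; have nu_neq0 := mulf_neq0 c2_neq0 c_neq0.
case: e => /= E; last first.
  rewrite mmul1r in E; rewrite (Rmat_orbit_I0 a1_neq0 a2_neq0 hY1 hY2 hz1 hz2 hm nu_neq0 E).
  by apply/proj_eqP; exists 1; rewrite ?mscale1 ?oner_neq0.
by case: (Rmat_orbit_I0sigma hz1 hm nu_neq0 E).
Qed.

End Uniqueness.

Section Existence.
Variable F : finFieldType.
Local Notation K := (laurent F).
Local Notation M2 := (mat2 F).
Local Notation t := (lt_ F).
Implicit Types (x y z Y : K) (m r g : M2).

Lemma inUk1 k : inUk k (1 : K).
Proof.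
by split; [exact: ord_ge1 | rewrite lcoef1; split => // i i_gt0 _; rewrite lcoef1 gt_eqF].
Qed.

Lemma I0_clear_e21 g v : e22 g v != 0 -> ord_ge v (e22 g) -> ord_ge (v + 1) (e21 g) ->
  exists2 m, inI0 m & e21 (mmul g m) = 0.
Proof.
case: g => g11 g12 p q /= qv_neq0 q_ge p_ge.
pose s := lmonom (- v) (q v)^-1; have s_ge : ord_ge (- v) s := @ord_ge_lmonom _ _ _.
exists (Mat2 (s * q) 0 (- (s * p)) 1); last by rewrite /mmul /= ?laurentE; ring.
split => /=; [split | exact: ord_ge0 | apply/in_tOP | exact: in_1tO1].
- by apply: ord_geMW s_ge q_ge _; rewrite addNr.
- by have := lcoefM_ord s_ge q_ge; rewrite addNr => ->; rewrite lmonom_coef eqxx mulVf.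
- by apply: ord_geN; apply: ord_geMW s_ge p_ge _; rewrite addrA addNr add0r.
Qed.

Lemma inA_clear_e21 g : inGL g -> exists2 a, inA a & e21 (mmul g a) = 0.
Proof.
move=> /lnzP det_neq0; set p := e21 g; set q := e22 g.
have [[v [qv_neq0 q_ge p_ge]]|not_direct] :=
  pselect (exists v, [/\ q v != 0, ord_ge v q & ord_ge (v + 1) p]).
  by have [m hm Em] := I0_clear_e21 qv_neq0 q_ge p_ge; exists m => //; apply: A_I0.
have p_neq0 : p != 0.
  apply: contra_not_neq not_direct => p0.
  have q_neq0 : q != 0.
    by apply: contraNneq det_neq0 => q0; apply/eqP; rewrite /mdet -/p -/q p0 q0 ?laurentE; ring.
  have [v qv q_ge] := exists_valuation q_neq0.
  by exists v; rewrite p0; split => //; exact: ord_ge0.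
have [w pw p_ge] := exists_valuation p_neq0.
have qt_ge : ord_ge (w + 1) (q * t).
  have [->|q_neq0] := eqVneq q 0; first by rewrite mul0r; exact: ord_ge0.
  have [v qv q_ge] := exists_valuation q_neq0.
  apply: (ord_geMW q_ge (@ord_ge_lmonom _ 1 1)); rewrite lerD2r leNgt.
  apply/negP => vw; apply: not_direct; exists v; split => //.
  by apply: ord_geW _ p_ge; lia.
have := @I0_clear_e21 (mmul g (sigma F)) w; rewrite mmul_sigma_r /=.
move=> /(_ pw p_ge qt_ge)[m hm Em].
have Eg : e21 (mmul g (mmul (sigma F) m)) = 0 by rewrite mmulA mmul_sigma_r.
by exists (mmul (sigma F) m) => //; apply: A_mul; [exact: A_sigma | exact: A_I0].
Qed.

Lemma lfilter_bounded (P : pred int) Y : lbounded (fun i => if P i then Y i else 0).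
Proof. by exists (lbound Y) => i Hi; rewrite lboundP //; case: ifP. Qed.

Definition lfilter (P : pred int) Y : K := Laurent (lfilter_bounded P Y).

Lemma lfilter_coef P Y i : lfilter P Y i = if P i then Y i else 0.
Proof. by []. Qed.

Lemma lfilter_split (P : pred int) Y : Y = lfilter P Y + lfilter (predC P) Y.
Proof.
by apply: laurent_ext => i; rewrite lcoefD !lfilter_coef /=; case: (P i); rewrite ?addr0 ?add0r.
Qed.

Lemma upper_to_Rmat g : e21 g = 0 -> mdet g != 0 ->
  exists m c n (a : F) Y, [/\ inI0 m, c != 0, a != 0,
    mscale c (mmul g m) = Rmat n a Y & forall i, n <= i -> Y i = 0].
Proof.
case: g => x y p w /= -> det_neq0.
have /andP[x_neq0 w_neq0] : (x != 0) && (w != 0).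
  by move: det_neq0; rewrite /mdet /= ?laurentE mulr0 subr0 mulf_eq0 negb_or.
have [n [a [u [a_neq0 u_1tO xE]]]] := laurent_normal_form (mulf_neq0 (invr_neq0 w_neq0) x_neq0).
have [u' u'_1tO uu'] := in_1tO_inv u_1tO.
pose Yhi := lfilter (fun i => n <= i) (w^-1 * y).
pose Ylo := lfilter (predC (fun i => n <= i)) (w^-1 * y).
have Ey : w^-1 * y = Yhi + Ylo := lfilter_split _ _.
have Yhi_ge : ord_ge n Yhi by move=> i Hi; rewrite lfilter_coef leNgt Hi.
pose be := - (lmonom (- n) a^-1 * Yhi).
have be_O : inO be.
  by apply/ord_geN/(ord_geMW (@ord_ge_lmonom _ (- n) a^-1) Yhi_ge); rewrite addNr.
exists (mmul (Mat2 u' 0 0 1) (Mat2 1 be 0 1)), w^-1, n, a, Ylo.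
split => //; last by move=> i ni; rewrite lfilter_coef /= ni.
- by apply: inI0M; apply: inI0_upper => //; first [exact: ord_ge0 | exact: in_1tO1].
- by rewrite invr_eq0.
rewrite /mscale /mmul /Rmat /= ?laurentE; congr Mat2.
- by transitivity (w^-1 * x * u'); [ring | rewrite xE -mulrA uu' mulr1].
- transitivity (w^-1 * x * u' * be + (Yhi + Ylo)); first by rewrite -Ey; ring.
  rewrite xE -(mulrA _ u) uu' mulr1 /be mulrN mulrA lmonomM addrN mulfV // lmonom01 mul1r.
  ring.
- ring.
- by transitivity (w^-1 * w); [ring | rewrite mulVf].
Qed.

Lemma Rmat_inGL n (a : F) Y : a != 0 -> inGL (Rmat n a Y).
Proof. by move=> a_neq0; apply/lnzP; rewrite /mdet /= ?laurentE mulr1 mulr0 subr0 lmonom_eq0. Qed.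

(* Witnesses: [z = 1 + e t^(n-m)] and [b = [1, be; 0, z]] with
   [be = -(e / a) t^(-m) Y], so that [a t^n be = (1 - z) Y]; [e] makes [be_0 = s]. *)
Lemma Rmat_stabilizer k n (m : int) (a s : F) Y :
  (0 < k)%N -> a != 0 -> Y m != 0 -> ord_ge m Y -> k%:Z <= n - m ->
  exists z b, [/\ inUk k z, inI0 b, e12 b 0 + e21 b 1 = s &
    mmul (mmul (diagz z) (Rmat n a Y)) b = mscale z (Rmat n a Y)].
Proof.
move=> k_gt0 a_neq0 Ym_neq0 Y_ge km.
pose e := - (s * a / Y m); pose z := 1 + lmonom (n - m) e.
have hz : inUk k z.
  split; [|split].
  - have e_ge : ord_ge 0 (lmonom (n - m) e) by apply: ord_geW (@ord_ge_lmonom _ _ _); lia.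
    exact: ord_geD (ord_ge1 F) e_ge.
  - by rewrite lcoefD lcoef1 lmonom_coef eqxx; case: eqP => [|_]; [lia | rewrite addr0].
  - move=> j j_gt0 j_lt; rewrite lcoefD lcoef1 lmonom_coef gt_eqF // add0r.
    by case: eqP => // E; lia.
pose be := lmonom (- m) (- (e / a)) * Y.
have be_O : inO be by apply: ord_geMW (@ord_ge_lmonom _ _ _) Y_ge _; rewrite addNr.
exists z, (Mat2 1 be 0 z); split => //=.
- exact: inI0_upper (in_1tO1 F) be_O (inUk_1tO hz).
- change (be 0 + (0 : K) 1 = s).
  by rewrite lcoef0 addr0 /be lcoef_lmonomM sub0r opprK /e; field; rewrite a_neq0 Ym_neq0.
rewrite /Rmat /mmul /mscale /diagz /= ?laurentE; congr Mat2; try ring.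
have tY : lmonom n a * be = - lmonom (n - m) e * Y.
  by rewrite mulrA lmonomM lmonomN; congr (lmonom _ _ * Y); field.
by transitivity (z * (lmonom n a * be + z * Y)); [ring | rewrite tY /z; ring].
Qed.

Lemma relevant_Rmat_low k psi chi (f : M2 -> algC) n (a : F) Y :
  (0 < k)%N -> add_character psi -> is_chi psi chi ->
  (forall M N, proj_eq M N -> f M = f N) ->
  (forall z a M, inUk k z -> inA a -> inGL M -> f (mmul (mmul (diagz z) M) a) = chi a * f M) ->
  a != 0 -> f (Rmat n a Y) != 0 -> forall i, i <= n - k%:Z -> Y i = 0.
Proof.
move=> k_gt0 [_ _ [s psi_s]] [_ _ _ chi_I0 _] f_proj f_equiv a_neq0 f_r i i_le.
apply/eqP; apply: contraT => Yi_neq0.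
have [m Ym_neq0 Y_ge] : exists2 m, Y m != 0 & ord_ge m Y.
  by apply: exists_valuation; apply/laurent_neq0P; exists i.
have km : k%:Z <= n - m.
  suff : m <= i by lia.
  by rewrite leNgt; apply: contra Yi_neq0 => /Y_ge ->.
have [z [b [hz hb b_s fixes_r]]] := Rmat_stabilizer s k_gt0 a_neq0 Ym_neq0 Y_ge km.
have := f_equiv z b _ hz (A_I0 hb) (Rmat_inGL n Y a_neq0).
rewrite fixes_r chi_I0 // b_s (f_proj _ (Rmat n a Y)) => [/(canLR (mulfK f_r))|].
  by rewrite mulfV // => /esym/eqP; rewrite (negbTE psi_s).
by apply/proj_eqP; exists z => //; exact: in_1tO_neq0 (inUk_1tO hz).
Qed.

Lemma inA_to_Rmat g : inGL g ->
  exists a c n (b : F) Y, [/\ inA a, c != 0, b != 0,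
    mscale c (mmul g a) = Rmat n b Y & forall i, n <= i -> Y i = 0].
Proof.
move=> gGL; have [a1 ha1 E21] := inA_clear_e21 gGL.
have det_neq0 : mdet (mmul g a1) != 0.
  by rewrite mdetM mulf_neq0 //; [apply/lnzP | exact: inA_det_neq0].
have [m [c [n [b [Y [hm c_neq0 b_neq0 E Y_hi]]]]]] := upper_to_Rmat E21 det_neq0.
exists (mmul a1 m), c, n, b, Y; split => //; last by rewrite mmulA.
by apply: A_mul => //; apply: A_I0.
Qed.

Lemma relevant_fun_neq0 k (chi f : M2 -> algC) g :
  (forall a, inA a -> chi a != 0) ->
  (forall M N, proj_eq M N -> f M = f N) ->
  (forall M, ~ orbitA k g M -> f M = 0) -> (exists M, f M != 0) ->
  (forall z a M, inUk k z -> inA a -> inGL M -> f (mmul (mmul (diagz z) M) a) = chi a * f M) ->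
  inGL g -> f g != 0.
Proof.
move=> chi_neq0 f_proj f_out [M fM] f_equiv gGL.
have [z [a [hz [ha M_eq]]]] : orbitA k g M.
  by apply: contrapT => /f_out fM0; rewrite fM0 eqxx in fM.
by move: fM; rewrite (f_proj _ _ M_eq) f_equiv // mulf_eq0 negb_or => /andP[].
Qed.

End Existence.

Theorem mainTheorem3 (F : finFieldType) (k : nat) (psi : F -> algC)
    (chi : mat2 F -> algC) :
  (0 < k)%N ->
  add_character psi ->
  is_chi psi chi ->
  forall g : mat2 F, inGL g -> relevant k chi g ->
    (exists r, inR k r /\ orbitA k g r) /\
    (forall r1 r2, inR k r1 -> inR k r2 -> orbitA k g r1 -> orbitA k g r2 ->
       proj_eq r1 r2).
Proof.
move=> k_gt0 psi_char chi_char g gGL [f [f_proj f_out f_nz f_equiv]].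
split=> [|r1 r2]; last exact: orbitA_inR_unique.
have chi_neq0 : forall a, inA a -> chi a != 0 by case: chi_char.
have fg := relevant_fun_neq0 chi_neq0 f_proj f_out f_nz f_equiv gGL.
have [a [c [n [b [Y [ha c_neq0 b_neq0 E Y_hi]]]]]] := inA_to_Rmat gGL.
have r_orbit : proj_eq (Rmat n b Y) (mmul (mmul (diagz 1) g) a).
  by apply/proj_eqP; exists c; rewrite // -E mmul1l.
have f_r : f (Rmat n b Y) != 0.
  by rewrite (f_proj _ _ r_orbit) f_equiv ?mulf_neq0 ?chi_neq0 //; exact: inUk1.
have Y_lo := relevant_Rmat_low k_gt0 psi_char chi_char f_proj f_equiv b_neq0 f_r.
exists (Rmat n b Y); split; last by exists 1, a; split; [exact: inUk1 |].
apply/inRP; exists n, b, Y; split => // i Yi_neq0; apply/andP; split.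
- by rewrite leNgt; apply: contra Yi_neq0 => i_lt; apply/eqP/Y_lo; lia.
- by rewrite leNgt; apply: contra Yi_neq0 => i_gt; apply/eqP/Y_hi; lia.
Qed.
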